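(* For all real numbers $a,b,c>0$, \[ \frac{abc(a+b+c)^3}{3(ab+bc+ca)(a^3c+ab^3+bc^3)}\leq 1. \] *)

From Stdlib Require Import Reals.

(* Writing Q = a^2 + b^2 + c^2, the polynomial identity

     (ab + bc + ca)(a^3 c + a b^3 + b c^3) - abc (a + b + c) Q
       = ((a^2 c - a b^2)^2 + (a b^2 - b c^2)^2 + (b c^2 - a^2 c)^2) / 2

   (equivalently, AM-GM on the three terms a^3 c / b, a b^3 / c, b c^3 / a)
   bounds the denominator below by 3 abc (a + b + c) Q, and 3 Q >= (a + b + c)^2
   finishes. *)

From Stdlib Require Import Reals Lra.
Open Scope R_scope.

Lemma Rdiv_le_1 (x y : R) : 0 < y -> x <= y -> x / y <= 1.
Proof.
  intros hy hxy.
  rewrite <- (Rdiv_diag y) by lra.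
  apply Rmult_le_compat_r; [apply Rlt_le, Rinv_0_lt_compat |]; assumption.
Qed.

Lemma sqr_sum3_le (a b c : R) : (a + b + c) ^ 2 <= 3 * (a ^ 2 + b ^ 2 + c ^ 2).
Proof.
  pose proof (pow2_ge_0 (a - b)); pose proof (pow2_ge_0 (b - c));
    pose proof (pow2_ge_0 (c - a)).
  lra.
Qed.

Lemma cyclic_sum_sq_identity (a b c : R) :
  (a * b + b * c + c * a) * (a ^ 3 * c + a * b ^ 3 + b * c ^ 3)
  - a * b * c * (a + b + c) * (a ^ 2 + b ^ 2 + c ^ 2)
  = ((a ^ 2 * c - a * b ^ 2) ^ 2 + (a * b ^ 2 - b * c ^ 2) ^ 2
     + (b * c ^ 2 - a ^ 2 * c) ^ 2) / 2.
Proof. field. Qed.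

Lemma cyclic_product_ge (a b c : R) :
  a * b * c * (a + b + c) * (a ^ 2 + b ^ 2 + c ^ 2)
  <= (a * b + b * c + c * a) * (a ^ 3 * c + a * b ^ 3 + b * c ^ 3).
Proof.
  pose proof (cyclic_sum_sq_identity a b c).
  pose proof (pow2_ge_0 (a ^ 2 * c - a * b ^ 2));
    pose proof (pow2_ge_0 (a * b ^ 2 - b * c ^ 2));
    pose proof (pow2_ge_0 (b * c ^ 2 - a ^ 2 * c)).
  lra.
Qed.

Lemma numerator_le_denominator (a b c : R) (ha : 0 < a) (hb : 0 < b) (hc : 0 < c) :
  a * b * c * (a + b + c) ^ 3
  <= 3 * (a * b + b * c + c * a) * (a ^ 3 * c + a * b ^ 3 + b * c ^ 3).
Proof.
  assert (hs : 0 <= a * b * c * (a + b + c)).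
  { apply Rmult_le_pos; [apply Rmult_le_pos; [apply Rmult_le_pos |] |]; lra. }
  pose proof (Rmult_le_compat_l _ _ _ hs (sqr_sum3_le a b c)).
  pose proof (cyclic_product_ge a b c).
  lra.
Qed.

Theorem mainTheorem3 (a b c : R) (ha : 0 < a) (hb : 0 < b) (hc : 0 < c) :
  a * b * c * (a + b + c) ^ 3 /
    (3 * (a * b + b * c + c * a) * (a ^ 3 * c + a * b ^ 3 + b * c ^ 3)) <= 1.
Proof.
  apply Rdiv_le_1; [| exact (numerator_le_denominator a b c ha hb hc)].
  assert (0 < a ^ 3 * c /\ 0 < a * b ^ 3 /\ 0 < b * c ^ 3) as (? & ? & ?)
    by (repeat split; apply Rmult_lt_0_compat; try apply pow_lt; lra).
  assert (0 < a * b /\ 0 < b * c /\ 0 < c * a) as (? & ? & ?)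
    by (repeat split; apply Rmult_lt_0_compat; lra).
  apply Rmult_lt_0_compat; lra.
Qed.
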